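(* For every real $r\ge1$ and every $x\in\mathbb{R}$, \[ f_r(x)\ge 2^{1-r}\sum_{m\ge0}s_m(x)^r, \] with equality when $x=\tfrac12$.
   Context: For $y\in\mathbb{R}$ let $\operatorname{sinc}(y)=\frac{\sin y}{y}$ for $y\neq0$ and $\operatorname{sinc}(0)=1$, and let $h(y)=\operatorname{sinc}^2(\pi y)$. For $r\ge1$, $f_r(x)=\sum_{m\in\mathbb{Z}}h(x+m)^r$, and for integers $m\ge0$, $s_m(x)=h(x+m)+h(x-(m+1))$. *)

From Stdlib Require Import Reals.
From Coquelicot Require Import Coquelicot.
Open Scope R_scope.

Definition sinc (y : R) : R := if Req_EM_T y 0 then 1 else sin y / y.

Definition h (y : R) : R := (sinc (PI * y)) ^ 2.

(* real power a^r for a >= 0, with the convention 0^r = 0 (r >= 1 > 0) *)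
Definition rpow (a r : R) : R := if Rle_dec a 0 then 0 else Rpower a r.

(* f_r(x) = sum_{m in Z} h(x+m)^r, split as m >= 0 plus m = -(k+1), k >= 0 *)
Definition fr (r x : R) : R :=
  Series (fun m : nat => rpow (h (x + INR m)) r)
  + Series (fun k : nat => rpow (h (x - INR (S k))) r).

Definition sm (m : nat) (x : R) : R := h (x + INR m) + h (x - INR (S m)).

(* Pair the term of index m >= 0 with that of index -(m+1): f_r(x) is the single series
   sum_m (h(x+m)^r + h(x-m-1)^r), both halves converging because h <= 1 and
   h(y) <= 2 / (1 + y^2).  Termwise, convexity of t^r gives the power-mean inequality
   a^r + b^r >= 2^(1-r) (a+b)^r, with equality for a = b; at x = 1/2 the evenness of h
   makes the two paired terms equal. *)

From Stdlib Require Import Reals Lra Lia Psatz.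
From Coquelicot Require Import Coquelicot.
Open Scope R_scope.

Lemma is_series_telescoping (u : nat -> R) :
  is_lim_seq u 0 -> is_series (fun n => u n - u (S n)) (u O).
Proof.
  intro Hu.
  assert (Hsum : forall n, sum_n (fun k => u k - u (S k)) n = u O - u (S n)).
  { induction n as [|n IH].
    - now rewrite sum_O.
    - rewrite sum_Sn, IH. unfold plus; simpl. ring. }
  assert (Hlim : is_lim_seq (fun n => u O - u (S n)) (u O - 0)).
  { apply (is_lim_seq_minus' _ _ (u O) 0).
    - apply is_lim_seq_const.
    - now apply (is_lim_seq_incr_1 u). }
  rewrite Rminus_0_r in Hlim.
  exact (is_lim_seq_ext _ _ _ (fun n => eq_sym (Hsum n)) Hlim).
Qed.

Lemma inv_sq_le_telescoping (a : R) : 1 <= a -> / a ^ 2 <= 2 * (/ a - / (a + 1)).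
Proof.
  intro Ha.
  replace (2 * (/ a - / (a + 1))) with (/ (a * (a + 1) / 2)) by (field; lra).
  replace (/ a ^ 2) with (/ (a * a)) by (field; lra).
  apply Rinv_le_contravar; nra.
Qed.

Lemma ex_series_inv_sq : ex_series (fun n => / (INR n + 1) ^ 2).
Proof.
  set (u := fun n => / (INR n + 1)).
  apply (@ex_series_le R_AbsRing R_CompleteNormedModule _
           (fun n => 2 * (u n - u (S n)))).
  - intro n. change norm with Rabs. pose proof (pos_INR n).
    rewrite Rabs_pos_eq by (apply Rlt_le, Rinv_0_lt_compat, pow_lt; lra).
    unfold u. rewrite S_INR. apply inv_sq_le_telescoping. lra.
  - apply (ex_series_scal_l 2 (fun n => u n - u (S n))).
    exists (u O). apply is_series_telescoping.
    unfold u. replace (Finite 0) with (Rbar_inv p_infty) by reflexivity.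
    apply is_lim_seq_inv; [|discriminate].
    eapply is_lim_seq_plus; [apply is_lim_seq_INR | apply is_lim_seq_const | reflexivity].
Qed.

Lemma sin_sq_le_sq (z : R) : sin z ^ 2 <= z ^ 2.
Proof.
  assert (Hpos : forall t, 0 <= t -> sin t ^ 2 <= t ^ 2).
  { intros t Ht. pose proof (SIN_bound t). pose proof PI2_3_2.
    destruct (Rle_or_lt 1 t) as [Ht1 | Ht1]; [nra |].
    destruct (Req_dec t 0) as [-> | Ht0]; [rewrite sin_0; lra |].
    pose proof (sin_lt_x t ltac:(lra)).
    pose proof (sin_ge_0 t ltac:(lra) ltac:(lra)). nra. }
  destruct (Rle_or_lt 0 z) as [Hz | Hz]; [now apply Hpos |].
  replace (sin z ^ 2) with (sin (- z) ^ 2) by (rewrite sin_neg; ring).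
  replace (z ^ 2) with ((- z) ^ 2) by ring.
  apply Hpos. lra.
Qed.

Lemma PI_mul_neq0 (y : R) : y <> 0 -> PI * y <> 0.
Proof. intro Hy. apply Rmult_integral_contrapositive. split; [apply PI_neq0 | exact Hy]. Qed.

Lemma h_eq (y : R) : y <> 0 -> h y = sin (PI * y) ^ 2 / (PI * y) ^ 2.
Proof.
  intro Hy. unfold h, sinc.
  destruct (Req_EM_T (PI * y) 0) as [E | _]; [now apply PI_mul_neq0 in Hy |].
  field. split; [exact Hy | apply PI_neq0].
Qed.

Lemma h_nonneg (y : R) : 0 <= h y.
Proof. apply pow2_ge_0. Qed.

Lemma h_even (y : R) : h (- y) = h y.
Proof.
  destruct (Req_dec y 0) as [-> | Hy]; [now rewrite Ropp_0 |].
  rewrite !h_eq by lra.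
  replace (PI * - y) with (- (PI * y)) by ring. rewrite sin_neg.
  field. split; [exact Hy | apply PI_neq0].
Qed.

Lemma h_le_1 (y : R) : h y <= 1.
Proof.
  destruct (Req_dec y 0) as [-> | Hy].
  - unfold h, sinc. rewrite Rmult_0_r. destruct (Req_EM_T 0 0); [lra | contradiction].
  - rewrite h_eq by exact Hy.
    assert (0 < (PI * y) ^ 2).
    { now apply pow2_gt_0, PI_mul_neq0. }
    apply Rmult_le_reg_r with ((PI * y) ^ 2); [assumption |].
    unfold Rdiv. rewrite Rmult_assoc, Rinv_l, Rmult_1_r, Rmult_1_l by lra.
    apply sin_sq_le_sq.
Qed.

Lemma h_mul_sq_le_1 (y : R) : h y * y ^ 2 <= 1.
Proof.
  destruct (Req_dec y 0) as [-> | Hy]; [rewrite pow_i by lia; lra |].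
  assert (Hsin : h y * (PI * y) ^ 2 = sin (PI * y) ^ 2).
  { rewrite h_eq by exact Hy. field. split; [exact Hy | apply PI_neq0]. }
  assert (HPI : 1 <= PI ^ 2) by (pose proof PI2_3_2; nra).
  pose proof (h_nonneg y). pose proof (pow2_ge_0 y). pose proof (SIN_bound (PI * y)).
  replace ((PI * y) ^ 2) with (PI ^ 2 * y ^ 2) in Hsin by ring.
  nra.
Qed.

Lemma h_shift_le (c : R) (m : nat) :
  h (c + INR m) <= (4 + 4 * (1 - c) ^ 2) * / (INR m + 1) ^ 2.
Proof.
  set (y := c + INR m). set (d := 1 - c).
  assert (Hm : INR m + 1 = y + d) by (unfold y, d; ring).
  assert (Hpos : 0 < (INR m + 1) ^ 2) by (apply pow2_gt_0; pose proof (pos_INR m); lra).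
  assert (Hsq : (INR m + 1) ^ 2 <= (2 + 2 * d ^ 2) * (1 + y ^ 2)).
  { rewrite Hm. pose proof (pow2_ge_0 y). nra. }
  pose proof (pow2_ge_0 d). pose proof (h_nonneg y). pose proof (h_le_1 y). pose proof (h_mul_sq_le_1 y).
  apply Rmult_le_reg_r with ((INR m + 1) ^ 2); [exact Hpos |].
  rewrite Rmult_assoc, Rinv_l by lra.
  nra.
Qed.

Lemma Rpower_1_l (s : R) : Rpower 1 s = 1.
Proof. unfold Rpower. now rewrite ln_1, Rmult_0_r, exp_0. Qed.

Lemma rpow_0_l (r : R) : rpow 0 r = 0.
Proof. unfold rpow. destruct (Rle_dec 0 0); lra. Qed.

Lemma rpow_pos_eq (a r : R) : 0 < a -> rpow a r = Rpower a r.
Proof. intro Ha. unfold rpow. destruct (Rle_dec a 0); [lra | reflexivity]. Qed.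

Lemma rpow_nonneg (a r : R) : 0 <= rpow a r.
Proof. unfold rpow. destruct (Rle_dec a 0); [lra | apply Rlt_le, exp_pos]. Qed.

Lemma rpow_le_self (a r : R) : 1 <= r -> 0 <= a <= 1 -> rpow a r <= a.
Proof.
  intros Hr Ha. destruct (Req_dec a 0) as [-> | Ha0]; [rewrite rpow_0_l; lra |].
  rewrite rpow_pos_eq by lra.
  replace r with (1 + (r - 1)) by ring.
  rewrite Rpower_plus, Rpower_1 by lra.
  assert (Rpower a (r - 1) <= Rpower 1 (r - 1)) by (apply Rle_Rpower_l; lra).
  rewrite Rpower_1_l in *. nra.
Qed.

Lemma ex_series_rpow_h_shift (r c : R) :
  1 <= r -> ex_series (fun m => rpow (h (c + INR m)) r).
Proof.
  intro Hr.
  apply (@ex_series_le R_AbsRing R_CompleteNormedModule _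
           (fun m => (4 + 4 * (1 - c) ^ 2) * / (INR m + 1) ^ 2)).
  - intro m. change norm with Rabs. rewrite Rabs_pos_eq by apply rpow_nonneg.
    eapply Rle_trans; [apply rpow_le_self | apply h_shift_le].
    + exact Hr.
    + split; [apply h_nonneg | apply h_le_1].
  - apply (ex_series_scal_l _ (fun m => / (INR m + 1) ^ 2)), ex_series_inv_sq.
Qed.

Lemma h_sub_S (x : R) (k : nat) : h (x - INR (S k)) = h ((1 - x) + INR k).
Proof. rewrite <- h_even, S_INR. f_equal. ring. Qed.

Lemma ex_series_rpow_h_sub_S (r x : R) :
  1 <= r -> ex_series (fun k => rpow (h (x - INR (S k))) r).
Proof.
  intro Hr. apply (ex_series_ext (fun k => rpow (h ((1 - x) + INR k)) r)).
  - intro k. now rewrite h_sub_S.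
  - now apply ex_series_rpow_h_shift.
Qed.

Lemma fr_eq_Series (r x : R) : 1 <= r ->
  fr r x = Series (fun m => rpow (h (x + INR m)) r + rpow (h (x - INR (S m))) r).
Proof.
  intro Hr. unfold fr.
  rewrite Series_plus; auto using ex_series_rpow_h_shift, ex_series_rpow_h_sub_S.
Qed.

Lemma Rpower_sub_1_mul_ge0 (s c w : R) : 0 <= s ->
  Rmin 1 w <= c <= Rmax 1 w -> 0 < c -> 0 <= (Rpower c s - 1) * (w - 1).
Proof.
  intros Hs Hc Hc0.
  destruct (Rle_or_lt 1 w) as [Hw | Hw].
  - rewrite Rmin_left in Hc by lra.
    assert (Rpower 1 s <= Rpower c s) by (apply Rle_Rpower_l; lra).
    rewrite Rpower_1_l in *. nra.
  - rewrite Rmax_left in Hc by lra.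
    assert (Rpower c s <= Rpower 1 s) by (apply Rle_Rpower_l; lra).
    rewrite Rpower_1_l in *. nra.
Qed.

(* Bernoulli's inequality for real exponents: t^r - r t has derivative r (t^(r-1) - 1),
   which vanishes at 1 and has the sign of t - 1. *)
Lemma Rpower_ge_bernoulli (w r : R) : 0 < w -> 1 <= r -> 1 + r * (w - 1) <= Rpower w r.
Proof.
  intros Hw Hr.
  set (f := fun t => Rpower t r - r * t).
  set (df := fun t => r * (Rpower t (r - 1) - 1)).
  assert (Hmin : 0 < Rmin 1 w) by (apply Rmin_glb_lt; lra).
  assert (Hder : forall t, 0 < t -> derivable_pt_lim f t (df t)).
  { intros t Ht. unfold f, df. rewrite Rmult_minus_distr_l, Rmult_1_r.
    apply derivable_pt_lim_minus; [now apply derivable_pt_lim_power |].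
    replace r with (r * 1) at 2 by ring.
    apply derivable_pt_lim_scal, derivable_pt_lim_id. }
  destruct (MVT_gen f 1 w df) as [c [Hc Hmvt]].
  - intros t Ht. apply is_derive_Reals, Hder. lra.
  - intros t Ht. apply derivable_continuous_pt. exists (df t). apply Hder. lra.
  - pose proof (Rpower_sub_1_mul_ge0 (r - 1) c w ltac:(lra) Hc ltac:(lra)).
    unfold f, df in Hmvt. rewrite Rpower_1_l in Hmvt. nra.
Qed.

Lemma Rpower_2_1_sub_mul (r : R) : Rpower 2 (1 - r) * Rpower 2 r = 2.
Proof. rewrite <- Rpower_plus. replace (1 - r + r) with 1 by ring. apply Rpower_1. lra. Qed.

Lemma Rpower_2_1_sub_le_1 (r : R) : 1 <= r -> Rpower 2 (1 - r) <= 1.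
Proof.
  intro Hr. rewrite <- (Rpower_O 2) at 2 by lra. apply Rle_Rpower; lra.
Qed.

(* With c the midpoint of a and b, Bernoulli at a/c and b/c gives (a/c)^r + (b/c)^r >= 2. *)
Lemma rpow_add_le (a b r : R) : 0 <= a -> 0 <= b -> 1 <= r ->
  Rpower 2 (1 - r) * rpow (a + b) r <= rpow a r + rpow b r.
Proof.
  intros Ha Hb Hr.
  pose proof (Rpower_2_1_sub_le_1 r Hr).
  assert (0 < Rpower 2 (1 - r)) by apply exp_pos.
  pose proof (rpow_nonneg a r). pose proof (rpow_nonneg b r).
  destruct (Req_dec a 0) as [-> | Ha0].
  { rewrite Rplus_0_l, rpow_0_l. nra. }
  destruct (Req_dec b 0) as [-> | Hb0].
  { rewrite Rplus_0_r, rpow_0_l. nra. }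
  rewrite !rpow_pos_eq by lra.
  set (c := (a + b) / 2).
  assert (Hc : 0 < c) by (unfold c; lra).
  assert (Hscale : forall t, 0 < t -> Rpower t r = Rpower c r * Rpower (t / c) r).
  { intros t Ht. rewrite Rpower_mult_distr by (try apply Rdiv_lt_0_compat; lra).
    f_equal. field. lra. }
  rewrite (Hscale a), (Hscale b), (Hscale (a + b)) by lra.
  replace ((a + b) / c) with 2 by (unfold c; field; lra).
  rewrite <- Rmult_assoc, (Rmult_comm _ (Rpower c r)), Rmult_assoc, Rpower_2_1_sub_mul.
  pose proof (Rpower_ge_bernoulli (a / c) r ltac:(apply Rdiv_lt_0_compat; lra) Hr).
  pose proof (Rpower_ge_bernoulli (b / c) r ltac:(apply Rdiv_lt_0_compat; lra) Hr).
  assert (r * (a / c - 1) + r * (b / c - 1) = 0).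
  { replace (b / c) with (2 - a / c) by (unfold c; field; lra). ring. }
  rewrite <- Rmult_plus_distr_l. apply Rmult_le_compat_l; [apply Rlt_le, exp_pos | lra].
Qed.

Lemma rpow_add_diag (a r : R) : 0 <= a ->
  Rpower 2 (1 - r) * rpow (a + a) r = rpow a r + rpow a r.
Proof.
  intro Ha. destruct (Req_dec a 0) as [-> | Ha0].
  { rewrite Rplus_0_r, !rpow_0_l. ring. }
  rewrite !rpow_pos_eq by lra.
  replace (a + a) with (2 * a) by ring.
  rewrite <- Rpower_mult_distr, <- Rmult_assoc, Rpower_2_1_sub_mul by lra. ring.
Qed.

Theorem mainTheorem6 :
  (forall r x : R, 1 <= r ->
     fr r x >= Rpower 2 (1 - r) * Series (fun m : nat => rpow (sm m x) r))
  /\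
  (forall r : R, 1 <= r ->
     fr r (1/2) = Rpower 2 (1 - r) * Series (fun m : nat => rpow (sm m (1/2)) r)).
Proof.
  split.
  - intros r x Hr. rewrite fr_eq_Series, <- Series_scal_l by exact Hr.
    apply Rle_ge, Series_le.
    + intro m. split.
      * apply Rmult_le_pos; [apply Rlt_le, exp_pos | apply rpow_nonneg].
      * apply rpow_add_le; auto using h_nonneg.
    + apply (@ex_series_plus R_AbsRing R_NormedModule);
        auto using ex_series_rpow_h_shift, ex_series_rpow_h_sub_S.
  - intros r Hr. rewrite fr_eq_Series, <- Series_scal_l by exact Hr.
    apply Series_ext. intro m. unfold sm.
    replace (h (1 / 2 - INR (S m))) with (h (1 / 2 + INR m)).
    + symmetry. apply rpow_add_diag, h_nonneg.
    + rewrite h_sub_S. f_equal. lra.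
Qed.
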